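(* Let $G$ be a finite non-abelian group such that $G/Z(G)\cong C_2\times C_2\times C_2$. Then the non-centralizer graph $\Upsilon_G$ is regular if and only if $[G:C_G(x)]=4$ for all $x\in G\setminus Z(G)$.
   Context: For a finite group $G$, $C_G(x)$ denotes the centralizer of $x\in G$ and $Z(G)$ the center. The non-centralizer graph $\Upsilon_G$ is the simple graph with vertex set $G$ in which two distinct vertices $x,y$ are adjacent if and only if $C_G(x)\neq C_G(y)$. A graph is regular if all its vertices have the same degree. *)

From mathcomp Require Import all_boot all_order all_algebra all_fingroup all_solvable.
Set Implicit Arguments. Unset Strict Implicit. Unset Printing Implicit Defensive.
Local Open Scope group_scope.

Definition noncent_adj (gT : finGroupType) (G : {group gT}) (x y : gT) : bool :=
  (x != y) && ('C_G[x] != 'C_G[y]).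

Definition noncent_deg (gT : finGroupType) (G : {group gT}) (x : gT) : nat :=
  #|[set y in G | noncent_adj G x y]|.

Definition noncent_regular (gT : finGroupType) (G : {group gT}) : Prop :=
  forall x y, x \in G -> y \in G -> noncent_deg G x = noncent_deg G y.

From mathcomp Require Import all_boot all_order all_algebra all_fingroup all_solvable.
From mathcomp Require Import zify.

Set Implicit Arguments. Unset Strict Implicit. Unset Printing Implicit Defensive.

(* A vertex x of the non-centralizer graph is adjacent to every vertex outside
   its fiber {y | C_G(y) = C_G(x)}, so the graph is regular iff every fiber has
   the size |Z(G)| of the fiber of 1.  For x outside Z(G) the fiber lies between
   the coset x Z(G) and C_G(x) \ Z(G).  Since [G : Z(G)] = 8, either
   [C_G(x) : Z(G)] = 2 and the fiber is exactly x Z(G), or [C_G(x) : Z(G)] = 4;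
   in the latter case x is central in C_G(x) but not in G, so C_G(x) / Z(C_G(x))
   has order at most 2 and C_G(x) is abelian, and being maximal of index 2 it is
   the centralizer of each of its non-central elements: the fiber is
   C_G(x) \ Z(G), of size 3 |Z(G)|. *)

Lemma dvdn_prime_of_mul_sq p a b : prime p -> a * b = p ^ 2 -> 1 < b -> a %| p.
Proof.
move=> p_pr ab b_gt1.
have /(dvdn_pfactor _ _ p_pr)[k le_k2 ak] : a %| p ^ 2 by rewrite -ab dvdn_mulr.
rewrite ak -{2}(expn1 p) dvdn_Pexp2l ?prime_gt1 //.
rewrite leqNgt; apply: contraTN b_gt1 => k_gt1.
have {k_gt1 le_k2} k2 : k = 2 by lia.
move: ab; rewrite ak k2 -{2}[p ^ 2]muln1 => /eqP.
by rewrite eqn_pmul2l ?expn_gt0 ?prime_gt0 // => /eqP ->.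
Qed.

Lemma mul_eq8_gt1 a b :
  a * b = 8 -> 1 < a -> 1 < b -> a = 4 /\ b = 2 \/ a = 2 /\ b = 4.
Proof.
move=> ab a_gt1 b_gt1; have : a <= 8 by rewrite -ab leq_pmulr //; lia.
by case: a ab a_gt1 => [|[|[|[|[|[|[|[|[|a]]]]]]]]] ab //= _ _; lia.
Qed.

Local Open Scope group_scope.

Section CentralizerFibers.

Variables (gT : finGroupType) (G : {group gT}).
Implicit Types x y z : gT.

Definition cent1_fiber x := [set y in G | 'C_G[y] == 'C_G[x]].

Lemma cent1_fiber_sub x : cent1_fiber x \subset G.
Proof. by apply/subsetP=> y; rewrite inE => /andP[]. Qed.

Lemma noncent_degE x : noncent_deg G x = (#|G| - #|cent1_fiber x|)%N.
Proof.
rewrite /noncent_deg.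
have -> : [set y in G | noncent_adj G x y] = G :\: cent1_fiber x.
  apply/setP=> y; rewrite !inE /noncent_adj; case: (y \in G) => //=.
  by case: (eqVneq x y) => [-> | _]; rewrite ?eqxx ?andbT // eq_sym.
by rewrite cardsD (setIidPr (cent1_fiber_sub x)).
Qed.

Lemma center_sub_subcent1 x : x \in G -> 'Z(G) \subset 'C_G[x].
Proof.
move=> xG; rewrite subsetI center_sub sub_cent1.
by apply: subsetP xG; rewrite centsC subsetIr.
Qed.

Lemma in_centerE x : x \in G -> (x \in 'Z(G)) = ('C_G[x] == G).
Proof.
by move=> xG; rewrite inE xG -sub_cent1 eqEsubset subsetIl subsetI subxx.
Qed.

Lemma subcent1M_center x z : z \in 'Z(G) -> 'C_G[x * z] = 'C_G[x].
Proof.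
move=> zZ; apply/setP=> g; rewrite !in_setI; case gG: (g \in G) => //=.
have cgz : commute g z by apply/commute_sym/(centerP _ _ zZ).2.
apply/cent1P/cent1P=> [cg | cg]; last exact: commuteM cg cgz.
by have := commuteM cg (commuteV cgz); rewrite mulgK.
Qed.

Lemma cent1_fiber_center z : z \in 'Z(G) -> cent1_fiber z = 'Z(G).
Proof.
move=> zZ; have zG := subsetP (center_sub G) z zZ.
have CzG : 'C_G[z] = G by apply/eqP; rewrite -in_centerE.
apply/setP=> y; rewrite inE CzG.
case yG: (y \in G); first by rewrite in_centerE.
by apply/esym/(contraFF _ yG)/subsetP/center_sub.
Qed.

Lemma lcoset_center_sub_cent1_fiber x : x \in G -> x *: 'Z(G) \subset cent1_fiber x.
Proof.
move=> xG; apply/subsetP=> _ /lcosetP[z zZ ->].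
by rewrite inE groupM ?(subsetP (center_sub G) z zZ) //= (subcent1M_center x zZ).
Qed.

Lemma cent1_fiber_sub_subcent1D x :
  x \in G :\: 'Z(G) -> cent1_fiber x \subset 'C_G[x] :\: 'Z(G).
Proof.
case/setDP=> xG xNZ; apply/subsetP=> y; rewrite inE => /andP[yG /eqP CyCx].
by rewrite in_setD -CyCx subcent1_id // andbT in_centerE // CyCx -in_centerE.
Qed.

Lemma noncent_regularP :
  noncent_regular G <-> {in G, forall x, #|cent1_fiber x| = #|'Z(G)|}.
Proof.
have fiber_le x : (#|cent1_fiber x| <= #|G|)%N by apply/subset_leq_card/cent1_fiber_sub.
have Z_le : (#|'Z(G)| <= #|G|)%N by apply/subset_leq_card/center_sub.
have deg1 : noncent_deg G 1 = (#|G| - #|'Z(G)|)%N.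
  by rewrite noncent_degE cent1_fiber_center ?group1.
split=> [reg x xG | fiberZ x y xG yG]; last by rewrite !noncent_degE !fiberZ.
by have := reg x 1 xG (group1 G); rewrite deg1 noncent_degE; have := fiber_le x; lia.
Qed.

Lemma card_cent1_fiber_index2 x :
  x \in G :\: 'Z(G) -> #|'C_G[x] : 'Z(G)| = 2 -> #|cent1_fiber x| = #|'Z(G)|.
Proof.
move=> xGZ iCZ; have [xG _] := setDP xGZ.
have sZC := center_sub_subcent1 xG.
have lower := subset_leq_card (lcoset_center_sub_cent1_fiber xG).
have upper := subset_leq_card (cent1_fiber_sub_subcent1D xGZ).
rewrite card_lcoset in lower; rewrite cardsD (setIidPr sZC) -(Lagrange sZC) iCZ in upper.
apply/eqP; rewrite eqn_leq lower andbT; apply: leq_trans upper _.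
by rewrite muln2 -addnn addnK.
Qed.

Lemma cent1_fiber_maximal_abelian x :
  x \in G -> maximal 'C_G[x] G -> abelian 'C_G[x] ->
  cent1_fiber x = 'C_G[x] :\: 'Z(G).
Proof.
move=> xG maxC cCC; have [ltCG maxCP] := maxgroupP maxC.
have xNZ : x \notin 'Z(G) by rewrite in_centerE // proper_neq.
apply/eqP; rewrite eqEsubset cent1_fiber_sub_subcent1D ?in_setD ?xNZ //=.
apply/subsetP=> y /setDP[yC yNZ]; have yG := subsetP (subcent1_sub x G) y yC.
have sCCy : 'C_G[x] \subset 'C_G[y].
  by rewrite subsetI subcent1_sub sub_cent1; apply: (subsetP cCC).
have ltCyG : 'C_G[y] \proper G.
  by rewrite properEneq subsetIl andbT -in_centerE.
by rewrite inE yG (maxCP _ ltCyG sCCy) eqxx.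
Qed.

Lemma abelian_subcent1_index_prime_sq p x :
  prime p -> x \in G :\: 'Z(G) -> #|'C_G[x] : 'Z(G)| = (p ^ 2)%N ->
  abelian 'C_G[x].
Proof.
move=> p_pr /setDP[xG xNZ] iCZ.
have sZZC : 'Z(G) \subset 'Z('C_G[x]).
  rewrite subsetI center_sub_subcent1 //= centsC.
  by rewrite (subset_trans (subcent1_sub x G)) // centsC subsetIr.
have xZC : x \in 'Z('C_G[x]) by rewrite in_setI subcent1_id //= -sub_cent1 subsetIr.
have ltZZC : (1 < #|'Z('C_G[x]) : 'Z(G)|)%N by rewrite indexg_gt1; apply/subsetPn; exists x.
have iCZC : (#|'C_G[x] : 'Z('C_G[x])| %| p)%N.
  by apply: dvdn_prime_of_mul_sq p_pr _ ltZZC; rewrite Lagrange_index ?center_sub.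
apply: cyclic_center_factor_abelian; apply: dvdn_prime_cyclic p_pr _.
by rewrite card_quotient ?normal_norm ?center_normal.
Qed.

End CentralizerFibers.

Section CenterIndexEight.

Variables (gT : finGroupType) (G : {group gT}).
Hypothesis iGZ : #|G : 'Z(G)| = 8%N.

Lemma index_subcent1_center_index8 x :
  x \in G :\: 'Z(G) ->
  #|G : 'C_G[x]| = 4%N /\ #|'C_G[x] : 'Z(G)| = 2%N \/
  #|G : 'C_G[x]| = 2%N /\ #|'C_G[x] : 'Z(G)| = 4%N.
Proof.
move=> /setDP[xG xNZ]; apply: mul_eq8_gt1.
- by rewrite Lagrange_index ?subcent1_sub ?center_sub_subcent1.
- rewrite indexg_gt1; apply: contra xNZ => sGC.
  by rewrite in_centerE // eqEsubset subsetIl.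
- by rewrite indexg_gt1; apply/subsetPn; exists x; rewrite ?subcent1_id.
Qed.

Lemma card_cent1_fiber_index8 x :
  x \in G :\: 'Z(G) -> (#|cent1_fiber G x| == #|'Z(G)|) = (#|G : 'C_G[x]| == 4%N).
Proof.
move=> xGZ; have [xG _] := setDP xGZ; have sZC := center_sub_subcent1 xG.
have [[-> iCZ] | [iGC iCZ]] := index_subcent1_center_index8 xGZ.
  by rewrite card_cent1_fiber_index2 // !eqxx.
have maxC : maximal 'C_G[x] G by rewrite p_index_maximal ?subcent1_sub ?iGC.
have cCC : abelian 'C_G[x] by apply: (@abelian_subcent1_index_prime_sq _ _ 2).
rewrite iGC cent1_fiber_maximal_abelian // cardsD (setIidPr sZC) -(Lagrange sZC) iCZ.
by rewrite mulnSr addnK -{2}[#|_|]muln1 eqn_pmul2l.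
Qed.

End CenterIndexEight.

Theorem theorem2p9 (gT : finGroupType) (G : {group gT}) :
  ~~ abelian G ->
  (G / 'Z(G))%g \isog [set: 'Z_2 * 'Z_2 * 'Z_2] ->
  (noncent_regular G <->
   (forall x, x \in G :\: 'Z(G) -> #|G : 'C_G[x]| = 4%N)).
Proof.
(* Non-abelianness is implied by G / Z(G) being nontrivial. *)
move=> _ GZiso.
have iGZ : #|G : 'Z(G)| = 8%N.
  rewrite -card_quotient ?normal_norm ?center_normal // (card_isog GZiso).
  by rewrite cardsT !card_prod card_ord.
rewrite noncent_regularP; split=> [fiberZ x xGZ | idx4 x xG].
  have [xG _] := setDP xGZ.
  by apply/eqP; rewrite -(card_cent1_fiber_index8 iGZ xGZ) fiberZ.
have [xZ | xNZ] := boolP (x \in 'Z(G)); first by rewrite cent1_fiber_center.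
have xGZ : x \in G :\: 'Z(G) by rewrite in_setD xNZ.
by apply/eqP; rewrite (card_cent1_fiber_index8 iGZ xGZ) idx4.
Qed.
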